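(* Let $q > 5$ be a Sophie Germain prime with $z(2q+1) \mid \pi(q)$. Then the Legendre symbol $\left(\frac{5}{q}\right) = -1$ and $\pi(q) \mid 2(q+1)$.
   Context: A Sophie Germain prime is a prime $q$ with $2q+1$ prime. $F_n$ denotes the $n$-th Fibonacci number ($F_0=0$, $F_1=1$). For a prime $p$, $z(p)$ is the least positive integer $k$ with $p \mid F_k$. $\pi(n)$ is the Pisano period, the least period of $(F_m \bmod n)_{m\ge0}$. *)

From mathcomp Require Import all_boot.
From mathcomp Require Import ssralg ssrint.
Set Implicit Arguments. Unset Strict Implicit. Unset Printing Implicit Defensive.

Fixpoint fib (n : nat) : nat :=
  match n with
  | 0 => 0
  | 1 => 1
  | (m.+1 as k).+1 => fib k + fib m
  end.

Definition sophie_germain (q : nat) : Prop := prime q /\ prime (2 * q + 1).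

Definition is_rank_of_apparition (p k : nat) : Prop :=
  0 < k /\ p %| fib k /\ (forall j, 0 < j < k -> ~~ (p %| fib j)).

Definition is_fib_period_mod (n P : nat) : Prop :=
  0 < P /\ forall m, fib (m + P) = fib m %[mod n].

Definition is_pisano_period (n P : nat) : Prop :=
  is_fib_period_mod n P /\ (forall P', is_fib_period_mod n P' -> P <= P').

Definition legendre (a p : nat) : int :=
  if p %| a then 0%R
  else if [exists x : 'I_p, (x * x == a %[mod p])] then 1%R else (-1)%R.

(* Binomial expansion of (1 + √5)^r over 'F_r gives Binet's congruences
   F_r = 5^((r-1)/2) and 2 F_(r+1) = 1 + 5^((r-1)/2) for an odd prime r, and the
   Euler symbol 5^((r-1)/2) is 1 or -1.  If it is 1, then F_(r-1) = 0 and
   F_r = 1, so the Pisano period divides r - 1; if it is -1, then F_(r+1) = 0 and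
   F_(r+2) = -1, so F_(m+r+1) = -F_m and the period divides 2(r+1).  Applied to
   p = 2q+1, the rank z(p) divides 2q or 2q+2.  If 5 were a square mod q then
   z(p) | pi(q) | q-1, hence z(p) | 4, impossible since F_1..F_4 < p.  So 5 is
   not a square mod q and pi(q) | 2(q+1). *)
From mathcomp Require Import all_boot.
From mathcomp Require Import ssralg ssrint zmodp finfield.
From mathcomp Require Import ring zify.
Set Implicit Arguments. Unset Strict Implicit. Unset Printing Implicit Defensive.

Import GRing.Theory.

Lemma fibSS n : fib n.+2 = fib n.+1 + fib n. Proof. by []. Qed.

Lemma coprime_fibS n : coprime (fib n) (fib n.+1).
Proof. by elim: n => [|n IH] //; rewrite /coprime fibSS gcdnDl gcdnC. Qed.

Lemma fib_period_dvd n P Q :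
  is_pisano_period n P -> is_fib_period_mod n Q -> P %| Q.
Proof.
move=> [[P0 perP] minP]; elim/ltn_ind: Q => Q IH perQ.
case: (ltngtP P Q) (minP _ perQ) => // [ltPQ _|-> _]; last exact: dvdnn.
have perQP : is_fib_period_mod n (Q - P).
  split=> [|m]; first by rewrite subn_gt0.
  by rewrite -(perP (m + (Q - P))) -addnA (subnK (ltnW ltPQ)) perQ.2.
have ltQP : Q - P < Q by rewrite ltn_subrL P0 (ltn_trans P0 ltPQ).
by rewrite -(subnK (ltnW ltPQ)) (dvdn_addr _ (IH _ ltQP perQP)) dvdnn.
Qed.

(* (1 + √5)^n = bin5_even n + bin5_odd n * √5. *)
Definition bin5_even n := \sum_(i < n.+1) 'C(n, i) * (~~ odd i * 5 ^ i./2).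
Definition bin5_odd n := \sum_(i < n.+1) 'C(n, i) * (odd i * 5 ^ i./2).

Lemma bin5_oddS n : bin5_odd n.+1 = bin5_even n + bin5_odd n.
Proof.
rewrite /bin5_odd /bin5_even big_ord_recl /= muln0 add0n.
under eq_bigr do rewrite binS mulnDl.
rewrite big_split /= addnC; congr (_ + _).
  by apply: eq_bigr => i _; rewrite add0n uphalf_half; case: (odd i).
rewrite [in RHS]big_ord_recl /= mul0n muln0 add0n.
by rewrite big_ord_recr /= bin_small // mul0n addn0.
Qed.

Lemma bin5_evenS n : bin5_even n.+1 = bin5_even n + 5 * bin5_odd n.
Proof.
rewrite /bin5_odd /bin5_even big_ord_recl /= bin0 mul1n.
under eq_bigr do rewrite binS mulnDl.
rewrite big_split /= addnA; congr (_ + _).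
  rewrite [in RHS]big_ord_recl /= bin0 [in LHS]big_ord_recr /= bin_small //.
  by rewrite mul0n addn0.
rewrite big_distrr /=; apply: eq_bigr => i _; rewrite add0n uphalf_half.
by case: (odd i) => /=; rewrite ?muln0 // add1n expnS !mul1n mulnCA.
Qed.

Lemma bin5_odd_fib n : bin5_odd n.+1 = 2 ^ n * fib n.+1.
Proof.
have odd0 : bin5_odd 0 = 0 by rewrite /bin5_odd big_ord1.
have even0 : bin5_even 0 = 1 by rewrite /bin5_even big_ord1.
have oddSS m : bin5_odd m.+2 = 2 * bin5_odd m.+1 + 4 * bin5_odd m.
  by rewrite bin5_oddS bin5_evenS bin5_oddS; ring.
elim/ltn_ind: n => -[|[|n]] IH.
- by rewrite bin5_oddS even0 odd0.
- by rewrite bin5_oddS bin5_evenS bin5_oddS even0 odd0.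
by rewrite oddSS !IH // (fibSS n.+1) !expnS; ring.
Qed.

Lemma sum_bin_prime_mod r (f : nat -> nat) : prime r ->
  \sum_(i < r.+1) 'C(r, i) * f i = f 0 + f r %[mod r].
Proof.
case: r => // r pr; rewrite big_ord_recl big_ord_recr /= bin0 binn !mul1n.
set M := \sum_(i < r) _.
have dvdM : r.+1 %| M.
  apply: dvdn_sum => i _; apply/dvdn_mulr/prime_dvd_bin => //.
  by rewrite /= /bump leq0n add1n ltnS ltn_ord.
by rewrite addnCA -modnDml (eqP dvdM) add0n.
Qed.

Lemma rank_apparition_gt4 n z : 3 < n -> is_rank_of_apparition n z -> 4 < z.
Proof.
move=> n_gt3 [z0 [n_fz _]]; rewrite ltnNge; apply/negP => z_le4.
by move: z0 z_le4 n_fz; case: z => [|[|[|[|[|z]]]]] //= _ _ /dvdn_leq; lia.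
Qed.

Local Open Scope ring_scope.

Lemma fib_shift_mul (R : pzSemiRingType) P (c : R) :
  (fib P)%:R = 0 :> R -> (fib P.+1)%:R = c ->
  forall m, (fib (m + P))%:R = c * (fib m)%:R.
Proof.
move=> fP fP1 m.
suff [] : (fib (m + P))%:R = c * (fib m)%:R /\
          (fib (m.+1 + P))%:R = c * (fib m.+1)%:R by [].
elim: m => [|m [IH IH1]]; first by rewrite add0n add1n fP fP1 mulr0 mulr1.
by split=> //; rewrite !addSn fibSS natrD -addSn IH1 IH -mulrDr -natrD.
Qed.

Section PrimeField.

Variable p : nat.
Hypothesis p_pr : prime p.

Lemma eqFp_nat a b : (a%:R : 'F_p) = b%:R <-> (a = b %[mod p])%N.
Proof.
split=> [eq_ab|eq_ab]; last by rewrite -(Fp_nat_mod p_pr) eq_ab Fp_nat_mod.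
by have := congr1 (@nat_of_ord _) eq_ab; rewrite !(val_Fp_nat p_pr).
Qed.

Lemma Fp_nat_eq0 a : (a%:R : 'F_p) = 0 <-> (p %| a)%N.
Proof. by rewrite (dvdn_pcharf (pchar_Fp p_pr)); split=> [->|/eqP]. Qed.

Lemma Fp_nat_neq0 a : (0 < a < p)%N -> (a%:R : 'F_p) != 0.
Proof. by move=> /andP[a0 ap]; apply/eqP => /Fp_nat_eq0 /dvdn_leq; lia. Qed.

Lemma Fp_fermat (x : 'F_p) : x != 0 -> x ^+ p.-1 = 1.
Proof.
move=> x0; apply: (mulfI x0); rewrite mulr1 -exprS prednK ?prime_gt0 //.
by have := expf_card x; rewrite card_Fp.
Qed.

Lemma rank_apparition_dvd z N :
  is_rank_of_apparition p z -> (p %| fib N)%N -> (z %| N)%N.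
Proof.
move=> [z0 [p_fz minz]] p_fN.
set c : 'F_p := (fib z.+1)%:R.
have c0 : c != 0.
  apply/eqP => /Fp_nat_eq0 p_fz1; move: (prime_gt1 p_pr).
  have : (p %| gcdn (fib z) (fib z.+1))%N by rewrite dvdn_gcd p_fz.
  by rewrite (eqP (coprime_fibS z)) dvdn1 => /eqP ->.
have fib_shift k r : (fib (k * z + r))%:R = c ^+ k * (fib r)%:R :> 'F_p.
  elim: k r => [|k IH] r; first by rewrite mul0n add0n expr0 mul1r.
  rewrite mulSn -addnA addnC.
  by rewrite (fib_shift_mul ((Fp_nat_eq0 _).2 p_fz) (erefl c)) IH exprS mulrA.
have /eqP := (Fp_nat_eq0 _).2 p_fN; rewrite {1}(divn_eq N z) fib_shift mulf_eq0.
rewrite expf_eq0 (negbTE c0) andbF /= => /eqP /Fp_nat_eq0 p_fr.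
apply: contraT; rewrite /dvdn => r0.
by have := minz (N %% z)%N; rewrite p_fr lt0n r0 ltn_pmod //; apply.
Qed.

Lemma Fp_fib_period P : (0 < P)%N ->
  (forall m, (fib (m + P))%:R = (fib m)%:R :> 'F_p) -> is_fib_period_mod p P.
Proof. by move=> P0 perP; split=> // m; apply/eqFp_nat. Qed.

Hypothesis p_gt5 : (5 < p)%N.

Let p_odd : odd p. Proof. by case: (even_prime p_pr) p_gt5 => [->|]. Qed.
Let two_neq0 : (2%:R : 'F_p) != 0. Proof. by apply: Fp_nat_neq0; lia. Qed.
Let five_neq0 : (5%:R : 'F_p) != 0. Proof. by apply: Fp_nat_neq0; lia. Qed.
Let p_pred_succ : p = p.-1.+1. Proof. by rewrite prednK ?prime_gt0. Qed.
Let half_p_mul2 : (p./2 * 2 = p.-1)%N.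
Proof. by rewrite -{2}(odd_double_half p) p_odd muln2. Qed.

Definition euler5 : 'F_p := 5%:R ^+ p./2.

Lemma fib_prime_Fp : (fib p)%:R = euler5 /\ 2%:R * (fib p.+1)%:R = 1 + euler5.
Proof.
have odd_p_euler5 : (bin5_odd p)%:R = euler5.
  rewrite /euler5 -natrX; apply/eqFp_nat.
  by rewrite (sum_bin_prime_mod (fun i => odd i * 5 ^ i./2)%N p_pr) /= p_odd mul1n.
have even_p_1 : (bin5_even p)%:R = 1 :> 'F_p.
  apply/(eqFp_nat _ 1).
  by rewrite (sum_bin_prime_mod (fun i => ~~ odd i * 5 ^ i./2)%N p_pr) /= p_odd.
have pow2_pred : (2%:R : 'F_p) ^+ p.-1 = 1 by apply: Fp_fermat.
split; first by rewrite -odd_p_euler5 p_pred_succ bin5_odd_fib -p_pred_succ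
                       natrM natrX pow2_pred mul1r.
have := congr1 (fun n => n%:R : 'F_p) (bin5_oddS p).
rewrite /= natrD even_p_1 odd_p_euler5 => <-.
by rewrite bin5_odd_fib natrM natrX [X in _ ^+ X]p_pred_succ exprS pow2_pred mulr1.
Qed.

Lemma euler5_pm1 : euler5 = 1 \/ euler5 = -1.
Proof.
have : euler5 ^+ 2 == 1.
  by rewrite -exprM half_p_mul2 Fp_fermat.
by rewrite sqrf_eq1 => /orP[] /eqP; [left|right].
Qed.

Lemma fib_euler5_1 : euler5 = 1 -> (fib p.-1)%:R = 0 :> 'F_p /\ (fib p)%:R = 1 :> 'F_p.
Proof.
have [fp fp1] := fib_prime_Fp; move=> e1; rewrite e1 in fp fp1; split=> //.
have {}fp1 : (fib p.+1)%:R = 1 :> 'F_p by apply: (mulfI two_neq0); rewrite fp1 mulr1.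
have fib_pS : fib p.+1 = (fib p + fib p.-1)%N by case: (p) (prime_gt0 p_pr).
by move: fp1; rewrite fib_pS natrD fp -[X in _ = X]addr0 => /addrI.
Qed.

Lemma fib_euler5_N1 : euler5 = -1 -> (fib p.+1)%:R = 0 :> 'F_p /\ (fib p)%:R = -1 :> 'F_p.
Proof.
have [fp fp1] := fib_prime_Fp; move=> eN1; rewrite eN1 in fp fp1; split=> //.
by move/eqP: fp1; rewrite addrN mulf_eq0 (negbTE two_neq0) /= => /eqP.
Qed.

Lemma rank_apparition_dvd_pred_or_succ z :
  is_rank_of_apparition p z -> (z %| p.-1)%N \/ (z %| p.+1)%N.
Proof.
move=> rank_z; have [/fib_euler5_1[f0 _]|/fib_euler5_N1[f0 _]] := euler5_pm1.
  by left; apply: rank_apparition_dvd rank_z _; apply/Fp_nat_eq0.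
by right; apply: rank_apparition_dvd rank_z _; apply/Fp_nat_eq0.
Qed.

Lemma pisano_dvd_pred P : euler5 = 1 -> is_pisano_period p P -> (P %| p.-1)%N.
Proof.
move=> /fib_euler5_1[f0 f1] pi_P; apply: (fib_period_dvd pi_P).
apply: Fp_fib_period => [|m]; first by rewrite -subn1 subn_gt0 prime_gt1.
by rewrite (fib_shift_mul f0 (_ : _ = 1)) ?mul1r // -p_pred_succ.
Qed.

Lemma pisano_dvd_double_succ P :
  euler5 = -1 -> is_pisano_period p P -> (P %| 2 * (p + 1))%N.
Proof.
move=> /fib_euler5_N1[f0 f1] pi_P; apply: (fib_period_dvd pi_P).
have f2 : (fib p.+2)%:R = -1 :> 'F_p by rewrite fibSS natrD f0 f1 add0r.
apply: Fp_fib_period => [|m]; first by rewrite muln_gt0 addn1.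
have -> : (m + 2 * (p + 1) = (m + p.+1) + p.+1)%N by lia.
by rewrite !(fib_shift_mul f0 f2) mulrA mulrNN mulr1 mul1r.
Qed.

Lemma legendre5_euler5_N1 : euler5 = -1 -> legendre 5 p = -1.
Proof.
move=> eN1; rewrite /legendre ifF; last by apply/negbTE/negP => /dvdn_leq; lia.
rewrite ifF //; apply/negbTE/negP => /existsP[x /eqP sqr_x].
have {}sqr_x : (x%:R : 'F_p) ^+ 2 = 5%:R.
  by rewrite -natrX; apply/eqFp_nat; rewrite expnS expn1.
have x0 : (x%:R : 'F_p) != 0.
  by apply: contraNneq five_neq0 => x0; rewrite -sqr_x x0 expr0n.
move: eN1; rewrite /euler5 -sqr_x -exprM mulnC half_p_mul2 Fp_fermat //.
move=> /eqP; rewrite -subr_eq0 opprK.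
by rewrite (_ : 1 + 1 = 2%:R) // (negbTE two_neq0).
Qed.

End PrimeField.

Local Close Scope ring_scope.

Theorem lemma6p3 (q zp piq : nat) :
  5 < q -> sophie_germain q ->
  is_rank_of_apparition (2 * q + 1) zp ->
  is_pisano_period q piq ->
  zp %| piq ->
  legendre 5 q = (-1)%R /\ piq %| 2 * (q + 1).
Proof.
move=> q_gt5 [q_pr p_pr] rank_zp pisano_q zp_piq.
have p_gt5 : 5 < 2 * q + 1 by lia.
have [e1|eN1] := euler5_pm1 q_pr q_gt5; last first.
  by split; [apply: legendre5_euler5_N1 | apply: pisano_dvd_double_succ].
have zp_2q2 : zp %| 2 * q.-1.
  by apply/dvdn_mull/(dvdn_trans zp_piq)/pisano_dvd_pred.
have zp_4 : zp %| 4.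
  case: (rank_apparition_dvd_pred_or_succ p_pr p_gt5 rank_zp) => /dvdn_sub/(_ zp_2q2).
    by rewrite addn1 /= (_ : 2 * q - 2 * q.-1 = 2); [move=> /dvdn_trans; apply | lia].
  by rewrite (_ : (2 * q + 1).+1 - 2 * q.-1 = 4) //; lia.
have := rank_apparition_gt4 (ltnW (ltnW p_gt5)) rank_zp.
by rewrite ltnNge dvdn_leq.
Qed.
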